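(* Let $H=\big(\frac{S_k}{z^k}+\cdots+\frac{S_1}{z}+S_0+N_0\big)\frac{dz}{z}$ be an unramified HTL normal form of rank $n$ with spectral type $(\mathbf{m}_0\le_{\phi_0}\mathbf{m}_1\le_{\phi_1}\cdots\le_{\phi_{k-1}}\mathbf{m}_k,\ \sigma(\mathbf{m}_0))$. Let $\mathcal{I}\colon I_0,I_1,\dots,I_r$ be a partition of $\{0,1,\dots,k\}$ with $0\in I_0$, write $I_j=\{i_{[j,0]}<i_{[j,1]}<\cdots<i_{[j,k_j]}\}$, and let $\mathsf{c}=(c_0,\dots,c_r)\in\mathbb{C}^{r+1}$ have pairwise distinct entries and satisfy $\iota_{\mathcal{I}}(\mathsf{c})\in\mathbb{D}(H)$. Write the partial fraction decomposition $H(\iota_{\mathcal{I}}(\mathsf{c}))=\sum_{j=0}^r H_{\mathcal{I}}(\mathsf{c})_{z_{c_j}}$ with $H_{\mathcal{I}}(\mathsf{c})_{z_{c_j}}=\sum_{\nu=0}^{k_j}\frac{A^{[j]}_\nu}{z_{c_j}^{\nu+1}}dz_{c_j}$, $z_{c_j}=z-c_j$, $A^{[j]}_\nu\in M_n(\mathbb{C})$. Then each $H_{\mathcal{I}}(\mathsf{c})_{z_{c_j}}$ is an unramified HTL normal form, with spectral type \[(\mathbf{m}_{i_{[j,0]}}\le_{\phi_{i_{[j,0]}}^{i_{[j,1]}}}\mathbf{m}_{i_{[j,1]}}\le\cdots\le_{\phi^{i_{[j,k_j]}}_{i_{[j,k_j-1]}}}\mathbf{m}_{i_{[j,k_j]}},\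 \mathrm{triv})\quad (j=1,\dots,r),\] and \[(\mathbf{m}_{i_{[0,0]}}\le_{\phi_{i_{[0,0]}}^{i_{[0,1]}}}\mathbf{m}_{i_{[0,1]}}\le\cdots\le_{\phi^{i_{[0,k_0]}}_{i_{[0,k_0-1]}}}\mathbf{m}_{i_{[0,k_0]}},\ \sigma(\mathbf{m}_0))\quad (j=0).\]
   Context: An unramified HTL normal form is $H=\big(\sum_{i=1}^k S_iz^{-i}+S_0+N_0\big)\frac{dz}{z}$ with $S_i\in M_n(\mathbb{C})$ diagonal and $N_0$ nilpotent commuting with all $S_i$. Spectral type: for $i=0,\dots,k$ let $\mathbb{C}^n=\bigoplus_{j=1}^{m(i)}V_{\langle i,j\rangle}$ be the decomposition into simultaneous eigenspaces of $(S_i,S_{i+1},\dots,S_k)$ and $\mathbf{m}_i=(\dim V_{\langle i,1\rangle},\dots,\dim V_{\langle i,m(i)\rangle})$; $\phi_i\colon\{1,\dots,m(i)\}\to\{1,\dots,m(i+1)\}$ is the map with $V_{\langle i+1,j\rangle}=\bigoplus_{\mu\in\phi_i^{-1}(j)}V_{\langle i,\mu\rangle}$, and for $i<i'$, $\phi_i^{i'}=\phi_{i'-1}\circ\cdots\circ\phi_i$ (the refinement map from $\mathbf{m}_i$ to $\mathbf{m}_{i'}$). The signature $\sigma(\mathbf{m}_0)$ is the family, over $j=1,\dots,m(0)$, of sequences $(\dim V_{\langle0,j\rangle},\dim\mathrm{Im}N_j,\dim\mathrm{Im}N_j^2,\dots,\dim\mathrm{Im}N_j^{d_j-1})$ where $N_j=N_0|_{V_{\langle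 0,j\rangle}}$ and $N_j^{d_j}=0\neq N_j^{d_j-1}$; ''triv'' means the signature of a nilpotent part $0$. The spectral type is $(\mathbf{m}_0\le_{\phi_0}\cdots\le_{\phi_{k-1}}\mathbf{m}_k,\sigma(\mathbf{m}_0))$. Unfolding: for $\mathbf{c}=(c_0,\dots,c_k)\in\mathbb{C}^{k+1}$, $H(\mathbf{c})=\big(\frac{S_k}{(z-c_1)\cdots(z-c_k)}+\cdots+\frac{S_1}{z-c_1}+S_0+N_0\big)\frac{dz}{z-c_0}$. The set $\mathbb{D}(H)$: let $s^{(l)}_{\langle i,j\rangle}$ be the eigenvalue of $S_l$ on $V_{\langle i,j\rangle}$ ($i\le l\le k$); for $j\neq j'$ let $t=t_i(j,j')$ be the largest $l\in\{i,\dots,k\}$ with $s^{(l)}_{\langle i,j\rangle}\ne s^{(l)}_{\langle i,j'\rangle}$, and put $\alpha^*_{i;j,j'}(x_0,\dots,x_k)=\sum_{l=i}^{t}(s^{(l)}_{\langle i,j\rangle}-s^{(l)}_{\langle i,j'\rangle})\prod_{l<\nu\le t}(x_i-x_\nu)$. Then $\mathbb{D}(H)=\mathbb{C}^{k+1}\setminus\bigcup_{i=0}^{k-1}\bigcup_{1\le j<j'\le m(i)}\{\alpha^*_{i;j,j'}=0\}$. For the partition $\mathcal{I}$, $\iota_{\mathcal{I}}\colon\mathbb{C}^{r+1}\to\mathbb{C}^{k+1}$ sends $(a_0,\dots,a_r)$ to the vector whose $i$-th entry is $a_l$ for $i\in I_l$. *)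

From HB Require Import structures.
From mathcomp Require Import all_boot all_order all_algebra.
From mathcomp Require Import reals.
From mathcomp Require Export complex.
Import GRing.Theory.
Local Open Scope ring_scope.

Section HTL.
Context {C : fieldType} {n : nat}.

(* (S_0,...,S_k, N_0) is an unramified HTL normal form
   (S_k z^-k + ... + S_1 z^-1 + S_0 + N_0) dz/z :
   S_i diagonal, N_0 nilpotent, N_0 commuting with every S_i. *)
Definition is_HTL (k : nat) (S : nat -> 'M[C]_n) (N : 'M[C]_n) : Prop :=
  [/\ forall i, (i <= k)%N -> is_diag_mx (S i),
      exists d : nat, N ^+ d = 0
    & forall i, (i <= k)%N -> S i *m N = N *m S i].

(* Coordinates p, q lie in the same simultaneous eigenspace of
   (S_i, S_{i+1}, ..., S_k) (the S_l being diagonal). *)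
Definition eqlev (k : nat) (S : nat -> 'M[C]_n) (i : nat) (p q : 'I_n) : bool :=
  [forall l : 'I_k.+1, (i <= l)%N ==> (S l p p == S l q q)].

Definition blk (k : nat) (S : nat -> 'M[C]_n) (i : nat) (p : 'I_n) : {set 'I_n} :=
  [set q | eqlev k S i p q].

Definition blocks (k : nat) (S : nat -> 'M[C]_n) (i : nat) : {set {set 'I_n}} :=
  [set blk k S i p | p : 'I_n].

Definition up_blk (k : nat) (S : nat -> 'M[C]_n) (i' : nat) (B : {set 'I_n}) :
  {set 'I_n} := \bigcup_(p in B) blk k S i' p.

Definition proj (B : {set 'I_n}) : 'M[C]_n :=
  diag_mx (\row_(p < n) (p \in B)%:R).

Definition imdim (N : 'M[C]_n) (B : {set 'I_n}) (e : nat) : nat :=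
  \rank (N ^+ e *m proj B).

(* signature sequence (dim V_B, dim Im N_B, ..., dim Im N_B^(d-1)),
   N_B^d = 0 <> N_B^(d-1). *)
Definition sigseq (N : 'M[C]_n) (B : {set 'I_n}) : seq nat :=
  take (find (fun e => imdim N B e == 0%N) (iota 0 n.+1))
       [seq imdim N B e | e <- iota 0 n.+1].

Definition tlev (k : nat) (S : nat -> 'M[C]_n) (i : nat) (p q : 'I_n) : nat :=
  \max_(l < k.+1 | (i <= l)%N && (S l p p != S l q q)) (l : nat).

Definition alpha (k : nat) (S : nat -> 'M[C]_n) (i : 'I_k.+1) (p q : 'I_n)
  (x : 'I_k.+1 -> C) : C :=
  let t := tlev k S i p q in
  \sum_(l < k.+1 | (i <= l <= t)%N)
     (S l p p - S l q q) * \prod_(nu < k.+1 | (l < nu <= t)%N) (x i - x nu).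

Definition inD (k : nat) (S : nat -> 'M[C]_n) (x : 'I_k.+1 -> C) : Prop :=
  forall (i : 'I_k.+1), (i < k)%N -> forall p q : 'I_n,
    ~~ eqlev k S i p q -> alpha k S i p q x != 0.

(* The unfolded form H(x) divided by dz, evaluated at z:
   sum_{l=0}^k S_l / ((z-x_0)...(z-x_l)) + N_0/(z-x_0). *)
Definition Hunf (k : nat) (S : nat -> 'M[C]_n) (N : 'M[C]_n)
  (x : 'I_k.+1 -> C) (z : C) : 'M[C]_n :=
  \sum_(l < k.+1) (\prod_(m < k.+1 | (m <= l)%N) (z - x m))^-1 *: S l
  + (z - x ord0)^-1 *: N.

(* Spectral-type data with labels = the blocks (simultaneous eigenspaces,
   as coordinate sets); the dimension of a label B is #|B|. *)
Record stype := STy {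
  st_len : nat;
  st_lv  : nat -> {set {set 'I_n}};
  st_phi : nat -> {set 'I_n} -> {set 'I_n};
  st_sig : {set 'I_n} -> seq nat }.

(* Equality of spectral types (up to renumbering of the eigenspaces). *)
Definition st_iso (T1 T2 : stype) : Prop :=
  st_len T1 = st_len T2 /\
  exists beta : nat -> {set 'I_n} -> {set 'I_n},
    [/\ forall i, (i <= st_len T1)%N ->
          {in st_lv T1 i &, injective (beta i)} /\
          [set beta i B | B in st_lv T1 i] = st_lv T2 i,
        forall i, (i <= st_len T1)%N -> forall B, B \in st_lv T1 i ->
          #|beta i B| = #|B|,
        forall i, (i < st_len T1)%N -> forall B, B \in st_lv T1 i ->
          st_phi T2 i (beta i B) = beta i.+1 (st_phi T1 i B)
      & forall B, B \in st_lv T1 0 -> st_sig T2 (beta 0 B) = st_sig T1 B].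

Definition spec_type (k : nat) (S : nat -> 'M[C]_n) (N : 'M[C]_n) : stype :=
  @STy k (blocks k S) (fun i => up_blk k S i.+1) (sigseq N).

(* Partition I_0,...,I_r of {0..k} given by part : 'I_k.+1 -> 'I_r.+1
   (I_j = part^-1(j)); I_j listed increasingly. *)
Definition Ilist (k r : nat) (part : 'I_k.+1 -> 'I_r.+1) (j : 'I_r.+1) : seq nat :=
  [seq (val i) | i <- enum 'I_k.+1 & part i == j].

Definition kj (k r : nat) (part : 'I_k.+1 -> 'I_r.+1) (j : 'I_r.+1) : nat :=
  (size (Ilist k r part j)).-1.

Definition ii (k r : nat) (part : 'I_k.+1 -> 'I_r.+1) (j : 'I_r.+1) (nu : nat) : nat :=
  nth 0%N (Ilist k r part j) nu.

Definition iotaI (k r : nat) (part : 'I_k.+1 -> 'I_r.+1) (c : 'I_r.+1 -> C) :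
  'I_k.+1 -> C := fun i => c (part i).

Definition target_type (k r : nat) (S : nat -> 'M[C]_n) (N : 'M[C]_n)
  (part : 'I_k.+1 -> 'I_r.+1) (j : 'I_r.+1) : stype :=
  @STy (kj k r part j)
      (fun nu => blocks k S (ii k r part j nu))
      (fun nu => up_blk k S (ii k r part j nu.+1))
      (if j == ord0 then sigseq N else sigseq 0).

End HTL.

From HB Require Import structures.
From mathcomp Require Import all_boot all_order all_algebra.
From mathcomp Require Import reals complex zify.
Import GRing.Theory Num.Theory.
Set Implicit Arguments.
Unset Strict Implicit.
Unset Printing Implicit Defensive.

(* Entrywise, the partial fraction identity is an identity of scalar rational
   functions.  The l-th term S_l / ((z - x_0) ... (z - x_l)) of the unfolded
   form has a pole of order #{m <= l | x_m = c_j} at c_j, and this order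
   exceeds nu exactly when l >= i_[j,nu].  Clearing denominators and expanding
   at c_j gives a triangular system for the coefficients at c_j, with the
   nonzero diagonal prod_{x_m <> c_j} (c_j - x_m).  Hence the coefficient of
   (z - c_j)^-(nu+1) only sees the S_l with l >= i_[j,nu]; and for the last
   level t at which the eigenvalues at p and q differ, the coefficient at the
   order of the pole of the t-th term is alpha*_{i;p,q} times a nonzero
   product, nonzero because iota(c) lies in D(H).  So the new coefficients are
   diagonal, commute with N_0, and their simultaneous eigenspaces at level nu
   are those of (S_i) at level i_[j,nu]. *)

Lemma nth_leq_count (s : seq nat) (nu l : nat) : sorted ltn s -> nu < size s ->
  (nth 0 s nu <= l) = (nu < count (leq^~ l) s).
Proof.
elim: s nu => [|x s IH] nu //= s_sorted nu_lt.
have s_gt_x : all (ltn x) s := order_path_min ltn_trans s_sorted.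
have [x_le|x_gt] := leqP x l.
  case: nu nu_lt => [|nu] //= nu_lt; rewrite add1n ltnS IH //.
  exact: path_sorted s_sorted.
have -> : count (leq^~ l) s = 0.
  apply/eqP; rewrite -leqn0 leqNgt -has_count; apply/hasPn => m /(allP s_gt_x) x_lt.
  by rewrite -ltnNge (ltn_trans x_gt).
case: nu nu_lt => [|nu] /= nu_lt; first by rewrite leqNgt x_gt.
rewrite leqNgt; apply/negbF/(leq_trans x_gt)/ltnW/(allP s_gt_x)/mem_nth.
by rewrite -ltnS.
Qed.

Section Partition.
Variables (k r : nat) (part : 'I_k.+1 -> 'I_r.+1).

(* The order at c_j of the pole of the l-th term of the unfolded form. *)
Definition pole_ord (j : 'I_r.+1) (l : nat) : nat :=
  #|[pred m : 'I_k.+1 | (m <= l) && (part m == j)]|.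

Lemma count_Ilist j (P : pred nat) :
  count P (Ilist k r part j) = #|[pred m : 'I_k.+1 | P m && (part m == j)]|.
Proof.
rewrite count_map count_filter cardE /enum_mem size_filter filter_predT.
by apply: eq_count => m; rewrite !inE.
Qed.

Lemma pole_ord_homo j : {homo pole_ord j : l m / l <= m}.
Proof.
move=> l m le_lm; apply: subset_leq_card; apply/subsetP => i; rewrite !inE.
by case/andP=> le_il ->; rewrite (leq_trans le_il).
Qed.

Lemma pole_ord_ltn j (l : nat) (m : 'I_k.+1) :
  l < m -> part m = j -> pole_ord j l < pole_ord j m.
Proof.
move=> lt_lm part_m; apply: proper_card; apply/properP; split.
  apply/subsetP => i; rewrite !inE => /andP[le_il ->].
  by rewrite andbT (leq_trans le_il) // ltnW.
by exists m; rewrite !inE part_m eqxx ?leqnn // andbT -ltnNge.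
Qed.

Hypothesis part_surj : forall j, exists i, part i = j.

Lemma card_part j : #|[pred m : 'I_k.+1 | part m == j]| = (kj k r part j).+1.
Proof.
have -> : #|[pred m : 'I_k.+1 | part m == j]| = size (Ilist k r part j).
  by rewrite -count_predT count_Ilist.
rewrite /kj prednK // lt0n size_eq0; have [i part_i] := part_surj j.
apply/eqP => /(congr1 (fun s => val i \in s)); rewrite map_f // mem_filter part_i eqxx.
by rewrite mem_enum.
Qed.

Lemma pole_ord_leq j l : pole_ord j l <= (kj k r part j).+1.
Proof.
by rewrite -card_part; apply/subset_leq_card/subsetP => m; rewrite !inE => /andP[].
Qed.

Lemma card_part_gt j l :
  #|[pred m : 'I_k.+1 | (l < m) && (part m == j)]| = (kj k r part j).+1 - pole_ord j l.
Proof.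
rewrite -card_part -(cardID (fun m : 'I_k.+1 => m <= l) [pred m | part m == j]).
rewrite [X in X + _ - _](_ : _ = pole_ord j l) ?addKn.
  by apply: eq_card => m; rewrite !inE ltnNge andbC.
by apply: eq_card => m; rewrite !inE andbC.
Qed.

Lemma sorted_Ilist j : sorted ltn (Ilist k r part j).
Proof.
apply: (subseq_sorted ltn_trans _ (iota_ltn_sorted 0 k.+1)).
by rewrite -val_enum_ord; apply/map_subseq/filter_subseq.
Qed.

Lemma size_Ilist j : size (Ilist k r part j) = (kj k r part j).+1.
Proof. by rewrite -card_part -count_predT count_Ilist. Qed.

Lemma ii_leqE j nu l : nu <= kj k r part j ->
  (ii k r part j nu <= l) = (nu < pole_ord j l).
Proof. by move=> le_nu; rewrite nth_leq_count ?sorted_Ilist ?count_Ilist ?size_Ilist. Qed.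

Lemma ii_part j nu : nu <= kj k r part j ->
  exists2 i : 'I_k.+1, val i = ii k r part j nu & part i = j.
Proof.
move=> le_nu; have : ii k r part j nu \in Ilist k r part j by rewrite mem_nth ?size_Ilist.
by case/mapP => i; rewrite mem_filter => /andP[/eqP part_i _] ->; exists i.
Qed.

End Partition.

Local Open Scope ring_scope.

Lemma poly_eq0_notin (C : numFieldType) (p : {poly C}) (s : seq C) :
  (forall z, z \notin s -> p.[z] = 0) -> p = 0.
Proof.
move=> p_eq0; set q := p * \prod_(x <- s) ('X - x%:P).
have q_eq0 : q = 0.
  apply: (@roots_geq_poly_eq0 _ q [seq i%:R | i <- iota 0 (size q)]).
  - apply/allP => z _; rewrite /root hornerM horner_prod mulf_eq0.
    have [z_s|/p_eq0 ->] := boolP (z \in s); last by rewrite eqxx.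
    rewrite prodf_seq_eq0; apply/orP; right; apply/hasP.
    by exists z; rewrite //= hornerXsubC subrr.
  - by rewrite map_inj_uniq ?iota_uniq // => m m' /eqP; rewrite eqr_nat => /eqP.
  - by rewrite size_map size_iota.
move/eqP: q_eq0; rewrite mulf_eq0 => /orP[/eqP //|].
by rewrite (negPf (monic_neq0 (monic_prod_XsubC _ _ _))).
Qed.

Lemma coefM_low_zero (R : nzRingType) (p q : {poly R}) M :
  (forall e, (e < M)%N -> p`_e = 0) -> (p * q)`_M = p`_M * q`_0.
Proof.
move=> p_low; rewrite coefM big_ord_recr /= subnn big1 ?add0r // => e _.
by rewrite p_low ?mul0r.
Qed.

Lemma low_coef_zero_mulr (R : idomainType) (p q : {poly R}) M :
  q`_0 != 0 -> (forall e, (e < M)%N -> (p * q)`_e = 0) ->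
  forall e, (e < M)%N -> p`_e = 0.
Proof.
move=> q0; elim: M => [//|M IH] pq_low.
have {}IH : forall e, (e < M)%N -> p`_e = 0.
  by apply: IH => e' lt_e'M; apply: pq_low; rewrite ltnW.
move=> e; rewrite ltnS leq_eqVlt => /orP[/eqP-> | /IH //].
have := pq_low M (ltnSn M); rewrite (coefM_low_zero _ IH).
by move/eqP; rewrite mulf_eq0 (negPf q0) orbF => /eqP.
Qed.

Lemma diag_mx_commE (R : idomainType) n (d : 'rV[R]_n) (M : 'M[R]_n) :
  diag_mx d *m M = M *m diag_mx d <-> forall p q, M p q != 0 -> d 0 p = d 0 q.
Proof.
rewrite mul_diag_mx mul_mx_diag; split=> [/matrixP comm_dM p q Mpq | eq_d].
  move/eqP: (comm_dM p q); rewrite !mxE mulrC -subr_eq0 -mulrBr mulf_eq0.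
  by rewrite (negPf Mpq) subr_eq0 => /eqP.
apply/matrixP => p q; rewrite !mxE.
by have [->|/eq_d->] := eqVneq (M p q) 0; rewrite ?mulr0 ?mul0r // mulrC.
Qed.

Section Levels.
Variables (C : fieldType) (n k : nat) (S : nat -> 'M[C]_n).

Lemma eqlevP i p q :
  reflect (forall l : 'I_k.+1, (i <= l)%N -> S l p p = S l q q) (eqlev k S i p q).
Proof.
apply: (iffP forallP) => [eq_pq l le_il | eq_pq l]; first exact/eqP/(implyP (eq_pq l)).
by apply/implyP => /eq_pq->.
Qed.

Lemma tlev_eq i p q (T : 'I_k.+1) : S T p p != S T q q ->
  (forall l : 'I_k.+1, S l p p != S l q q -> (l <= T)%N) -> (i <= T)%N ->
  tlev k S i p q = T.
Proof.
move=> neq_T T_max le_iT; apply/eqP; rewrite eqn_leq; apply/andP; split.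
  by apply/bigmax_leqP => l /andP[_ /T_max].
by apply: (leq_bigmax_cond (F := fun l : 'I_k.+1 => val l)); rewrite le_iT.
Qed.

Lemma last_level_diff i p q : ~~ eqlev k S i p q ->
  exists T : 'I_k.+1, [/\ (i <= T)%N, S T p p != S T q q
    & forall l : 'I_k.+1, S l p p != S l q q -> (l <= T)%N].
Proof.
rewrite /eqlev negb_forall => /existsP[l0]; rewrite negb_imply => /andP[le_l0 neq_l0].
have [T neq_T T_max] :=
  @arg_maxnP _ l0 (fun l : 'I_k.+1 => S l p p != S l q q) (fun l => val l) neq_l0.
exists T; split=> //; exact: leq_trans le_l0 (T_max _ neq_l0).
Qed.

End Levels.

Section PartialFractions.
Variables (C : numFieldType) (k r : nat) (part : 'I_k.+1 -> 'I_r.+1) (c : 'I_r.+1 -> C).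
Hypothesis part_surj : forall j, exists i, part i = j.
Hypothesis c_inj : injective c.

Local Notation x m := (c (part m)).
Local Notation kp j := (kj k r part j).

Definition is_pfrac (s : 'I_k.+1 -> C) (a : 'I_r.+1 -> nat -> C) : Prop :=
  forall z, (forall j, z != c j) ->
    \sum_(l < k.+1) (\prod_(m < k.+1 | (m <= l)%N) (z - x m))^-1 * s l =
    \sum_(j < r.+1) \sum_(nu < (kp j).+1) ((z - c j) ^+ nu.+1)^-1 * a j nu.

Lemma is_pfracB s1 a1 s2 a2 : is_pfrac s1 a1 -> is_pfrac s2 a2 ->
  is_pfrac (fun l => s1 l - s2 l) (fun j nu => a1 j nu - a2 j nu).
Proof.
move=> id1 id2 z z_c; under eq_bigr do rewrite mulrBr.
rewrite sumrB id1 // id2 // -sumrB; apply: eq_bigr => j _.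
by rewrite -sumrB; apply: eq_bigr => nu _; rewrite mulrBr.
Qed.

Definition prodX (P : pred 'I_k.+1) : {poly C} := \prod_(m | P m) ('X - (x m)%:P).

(* The two sides of [is_pfrac s a] multiplied by prod_m (z - x m). *)
Definition lhs_poly (s : 'I_k.+1 -> C) : {poly C} :=
  \sum_(l < k.+1) s l *: prodX (fun m => (l < m)%N).

Definition rhs_poly (a : 'I_r.+1 -> nat -> C) : {poly C} :=
  \sum_(j < r.+1) (\sum_(nu < (kp j).+1) a j nu *: ('X - (c j)%:P) ^+ (kp j - nu))
                  * prodX (fun m => part m != j).

Lemma horner_prodX P z : (prodX P).[z] = \prod_(m | P m) (z - x m).
Proof. by rewrite horner_prod; apply: eq_bigr => m _; rewrite hornerXsubC. Qed.

Lemma horner_lhs_poly s z : (forall j, z != c j) ->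
  (lhs_poly s).[z] = (prodX predT).[z] *
    \sum_(l < k.+1) (\prod_(m < k.+1 | (m <= l)%N) (z - x m))^-1 * s l.
Proof.
move=> z_c; rewrite horner_sum mulr_sumr; apply: eq_bigr => l _.
rewrite hornerZ mulrA [LHS]mulrC; congr (_ * _).
rewrite !horner_prodX [in RHS](bigID (fun m : 'I_k.+1 => (m <= l)%N)) /=.
rewrite mulrAC divff ?mul1r.
  by apply: eq_bigl => m; rewrite ltnNge.
by apply/prodf_neq0 => m _; rewrite subr_eq0.
Qed.

Lemma horner_rhs_poly a z : (forall j, z != c j) ->
  (rhs_poly a).[z] = (prodX predT).[z] *
    \sum_(j < r.+1) \sum_(nu < (kp j).+1) ((z - c j) ^+ nu.+1)^-1 * a j nu.
Proof.
move=> z_c; rewrite horner_sum mulr_sumr; apply: eq_bigr => j _.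
rewrite hornerM !horner_prodX [in RHS](bigID (fun m => part m == j)) /=.
rewrite [in RHS](eq_bigr (fun=> z - c j)) => [|m /eqP-> //].
rewrite prodr_const card_part // [RHS]mulrAC; congr (_ * _).
rewrite horner_sum mulr_sumr; apply: eq_bigr => nu _.
rewrite hornerZ horner_exp hornerXsubC.
rewrite [X in _ ^+ X * _](_ : _ = kp j - nu + nu.+1)%N; last first.
  by rewrite addnS subnK // -ltnS.
by rewrite exprD -mulrA mulVKf ?expf_neq0 ?subr_eq0 // mulrC.
Qed.

Lemma pfrac_poly s a : is_pfrac s a -> lhs_poly s = rhs_poly a.
Proof.
move=> id_sa; apply/eqP; rewrite -subr_eq0; apply/eqP.
apply: (poly_eq0_notin (s := [seq c j | j <- enum 'I_r.+1])) => z z_c.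
have {}z_c j : z != c j by apply: contraNneq z_c => ->; rewrite map_f ?mem_enum.
by rewrite hornerD hornerN horner_lhs_poly // horner_rhs_poly // id_sa // subrr.
Qed.

Local Notation shift j p := (p \Po ('X + (c j)%:P)).

Lemma shift_prodX j P : shift j (prodX P) =
  'X^#|[pred m | P m && (part m == j)]| *
  \prod_(m | P m && (part m != j)) ('X + (c j - x m)%:P).
Proof.
rewrite rmorph_prod (bigID (fun m => part m == j)) /=; congr (_ * _).
  rewrite (eq_bigr (fun=> 'X)) => [|m /andP[_ /eqP->]]; last first.
    by rewrite comp_polyB comp_polyX comp_polyC addrK.
  by rewrite prodr_const; congr (_ ^+ _); apply: eq_card.
by apply: eq_bigr => m _; rewrite comp_polyB comp_polyX comp_polyC polyCB addrA.
Qed.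

Lemma coef_shift_prodX_lt j P e : (e < #|[pred m | P m && (part m == j)]|)%N ->
  (shift j (prodX P))`_e = 0.
Proof. by move=> lt_e; rewrite shift_prodX coefXnM lt_e. Qed.

Lemma coef_shift_prodX_card j P :
  (shift j (prodX P))`_#|[pred m | P m && (part m == j)]| =
  \prod_(m | P m && (part m != j)) (c j - x m).
Proof.
rewrite shift_prodX coefXnM ltnn subnn -horner_coef0 horner_prod.
by apply: eq_bigr => m _; rewrite hornerD hornerX hornerC add0r.
Qed.

(* The principal part at c_j, multiplied by (z - c_j)^(kj+1) and shifted to 0:
   the coefficient of (z - c_j)^-(nu+1) sits in degree kj - nu. *)
Definition local_poly (a : 'I_r.+1 -> nat -> C) j : {poly C} :=
  \poly_(e < (kp j).+1) a j (kp j - e)%N.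

Lemma shift_principal_part (a : 'I_r.+1 -> nat -> C) j :
  shift j (\sum_(nu < (kp j).+1) a j nu *: ('X - (c j)%:P) ^+ (kp j - nu)) =
  local_poly a j.
Proof.
rewrite rmorph_sum /local_poly poly_def (reindex_inj rev_ord_inj) /=.
apply: eq_bigr => nu _; rewrite comp_polyZ rmorphXn /= comp_polyB comp_polyX.
by rewrite comp_polyC addrK subSS subKn // -ltnS.
Qed.

Lemma shift_rhs_poly_low a j e : (e <= kp j)%N ->
  (shift j (rhs_poly a))`_e =
  (local_poly a j * shift j (prodX (fun m => part m != j)))`_e.
Proof.
move=> le_e; rewrite rmorph_sum coef_sum (bigD1 j) //= [X in _ + X]big1 ?addr0.
  by rewrite rmorphM /= shift_principal_part.
move=> j' j'_j; rewrite rmorphM /= shift_prodX mulrCA coefXnM ifT //.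
rewrite (eq_card (B := [pred m | part m == j])) ?card_part // => m.
by rewrite !inE; case: eqP => // ->; rewrite (negPf j'_j).
Qed.

Lemma shift_lhs_poly_coef s j e : (shift j (lhs_poly s))`_e =
  \sum_(l < k.+1) s l * (shift j (prodX (fun m => (l < m)%N)))`_e.
Proof.
rewrite /lhs_poly rmorph_sum coef_sum; apply: eq_bigr => l _.
by rewrite /= comp_polyZ coefZ.
Qed.

Lemma coef0_shift_prodX_other j : (shift j (prodX (fun m => part m != j)))`_0 =
  \prod_(m | part m != j) (c j - x m).
Proof.
have card0 : #|[pred m | (part m != j) && (part m == j)]| = 0%N.
  by apply: eq_card0 => m; rewrite !inE andNb.
by rewrite -[in LHS]card0 coef_shift_prodX_card; apply: eq_bigl => m; rewrite andbb.
Qed.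

Lemma prod_diff_neq0 j (P : pred 'I_k.+1) : (forall m, P m -> part m != j) ->
  \prod_(m | P m) (c j - x m) != 0.
Proof.
move=> P_part; apply/prodf_neq0 => m /P_part part_m.
by rewrite subr_eq0; apply: contra part_m => /eqP/c_inj->.
Qed.

Lemma pfrac_vanish s a j nu : is_pfrac s a ->
  (forall l, s l != 0 -> (pole_ord part j l <= nu)%N) ->
  forall nu', (nu <= nu' <= kp j)%N -> a j nu' = 0.
Proof.
move=> id_sa s_ord nu' /andP[le_nu le_nu'].
have P0 : (shift j (prodX (fun m => part m != j)))`_0 != 0.
  by rewrite coef0_shift_prodX_other; apply: prod_diff_neq0.
have low e : (e < (kp j).+1 - nu)%N ->
    (local_poly a j * shift j (prodX (fun m => part m != j)))`_e = 0.
  move=> lt_e; rewrite -shift_rhs_poly_low; last by lia.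
  rewrite -(pfrac_poly id_sa) shift_lhs_poly_coef big1 // => l _.
  have [->|s_l] := eqVneq (s l) 0; first by rewrite mul0r.
  rewrite coef_shift_prodX_lt ?mulr0 // card_part_gt //; have := s_ord l s_l; lia.
have := low_coef_zero_mulr P0 low (_ : (kp j - nu' < (kp j).+1 - nu)%N).
by rewrite coef_poly ltnS leq_subr subKn //; apply; lia.
Qed.

Lemma pfrac_lead s a j nu : is_pfrac s a -> (nu <= kp j)%N ->
  (forall l, s l != 0 -> (pole_ord part j l <= nu.+1)%N) ->
  a j nu * \prod_(m | part m != j) (c j - x m) =
  \sum_(l < k.+1 | pole_ord part j l == nu.+1)
     s l * \prod_(m : 'I_k.+1 | (l < m)%N && (part m != j)) (c j - x m).
Proof.
move=> id_sa le_nu s_ord.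
have low e : (e < kp j - nu)%N -> (local_poly a j)`_e = 0.
  by move=> lt_e; rewrite coef_poly ifT ?(pfrac_vanish id_sa s_ord) //; lia.
have := coefM_low_zero (shift j (prodX (fun m => part m != j))) low.
rewrite coef_poly ifT ?subKn ?ltnS ?leq_subr // coef0_shift_prodX_other => <-.
rewrite -shift_rhs_poly_low ?leq_subr // -(pfrac_poly id_sa) shift_lhs_poly_coef.
rewrite [RHS]big_mkcond; apply: eq_bigr => l _.
have [->|s_l] := eqVneq (s l) 0; first by rewrite !mul0r if_same.
case: eqP => [ord_l|ord_l].
  by rewrite -coef_shift_prodX_card card_part_gt // ord_l subSS.
rewrite coef_shift_prodX_lt ?mulr0 // card_part_gt //; have := s_ord l s_l; lia.
Qed.

End PartialFractions.

Section Unfolding.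
Variables (C : numFieldType) (n k r : nat) (S : nat -> 'M[C]_n) (N : 'M[C]_n).
Variables (part : 'I_k.+1 -> 'I_r.+1) (c : 'I_r.+1 -> C) (A : 'I_r.+1 -> nat -> 'M[C]_n).
Hypothesis S_HTL : is_HTL k S N.
Hypothesis part_surj : forall j, exists i, part i = j.
Hypothesis part0 : part ord0 = ord0.
Hypothesis c_inj : injective c.
Hypothesis c_inD : inD k S (iotaI k r part c).
Hypothesis A_pfrac : forall z, (forall j, z != c j) ->
  Hunf k S N (iotaI k r part c) z =
  \sum_(j < r.+1) \sum_(nu < (kj k r part j).+1) ((z - c j) ^+ nu.+1)^-1 *: A j nu.

Local Notation kp j := (kj k r part j).
Local Notation x m := (c (part m)).

Definition Sloc j nu := A j nu - (if (j == ord0) && (nu == 0%N) then N else 0).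

Lemma Sloc_pfrac_mx z : (forall j, z != c j) ->
  \sum_(l < k.+1) (\prod_(m < k.+1 | (m <= l)%N) (z - x m))^-1 *: S l =
  \sum_(j < r.+1) \sum_(nu < (kp j).+1) ((z - c j) ^+ nu.+1)^-1 *: Sloc j nu.
Proof.
move=> z_c.
have N_term : \sum_(j < r.+1) \sum_(nu < (kp j).+1) ((z - c j) ^+ nu.+1)^-1 *:
    (if (j == ord0) && (nu == 0%N :> nat) then N else 0) = (z - c ord0)^-1 *: N.
  rewrite (bigD1 ord0) //= big_ord_recl /= expr1 big1 ?addr0 => [|nu _].
    by rewrite big1 ?addr0 // => j /negPf->; rewrite big1 // => nu _; rewrite scaler0.
  by rewrite scaler0.
have := A_pfrac z_c; rewrite /Hunf /iotaI part0 => /(canRL (addrK _)) ->.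
rewrite -N_term /Sloc -sumrB; apply: eq_bigr => j _.
by rewrite -sumrB; apply: eq_bigr => nu _; rewrite scalerBr.
Qed.

Lemma is_pfrac_Sloc_entry p q :
  is_pfrac part c (fun l => S l p q) (fun j nu => Sloc j nu p q).
Proof.
move=> z z_c; have := congr1 (fun M : 'M_n => M p q) (Sloc_pfrac_mx z_c).
rewrite /= !summxE => eq_pq.
transitivity (\sum_(l < k.+1) ((\prod_(m < k.+1 | (m <= l)%N) (z - x m))^-1 *: S l) p q).
  by apply: eq_bigr => l _; rewrite mxE.
rewrite eq_pq; apply: eq_bigr => j _.
by rewrite summxE; apply: eq_bigr => nu _; rewrite mxE.
Qed.

Lemma is_pfrac_Sloc_diag p q : is_pfrac part c (fun l => S l p p - S l q q)
  (fun j nu => Sloc j nu p p - Sloc j nu q q).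
Proof. exact: is_pfracB (is_pfrac_Sloc_entry p p) (is_pfrac_Sloc_entry q q). Qed.

Lemma S_diag (l : 'I_k.+1) : is_diag_mx (S l).
Proof. by case: S_HTL => S_diag _ _; apply: S_diag; rewrite -ltnS. Qed.

Lemma Sloc_offdiag j nu p q : (nu <= kp j)%N -> p != q -> Sloc j nu p q = 0.
Proof.
move=> le_nu neq_pq.
apply: (pfrac_vanish part_surj c_inj (is_pfrac_Sloc_entry p q) (nu := 0)).
  by move=> l; rewrite (is_diag_mxP (S_diag l)) ?eqxx.
by rewrite le_nu.
Qed.

Lemma Sloc_eq_of_eqlev j nu p q : (nu <= kp j)%N ->
  eqlev k S (ii k r part j nu) p q ->
  forall nu', (nu <= nu' <= kp j)%N -> Sloc j nu' p p = Sloc j nu' q q.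
Proof.
move=> le_nu /eqlevP eq_pq nu' le_nu'; apply/eqP; rewrite -subr_eq0; apply/eqP.
apply: (pfrac_vanish part_surj c_inj (is_pfrac_Sloc_diag p q) _ le_nu') => l d_l.
rewrite leqNgt -(ii_leqE part_surj _ le_nu); apply: contra d_l.
by move/eq_pq->; rewrite subrr.
Qed.

Lemma lead_sum_alpha j p q (T I : 'I_k.+1) :
  S T p p != S T q q -> (forall l : 'I_k.+1, S l p p != S l q q -> (l <= T)%N) ->
  part I = j ->
  (forall l, (I <= l)%N = (pole_ord part j T <= pole_ord part j l)%N) ->
  \sum_(l < k.+1 | pole_ord part j l == pole_ord part j T)
     (S l p p - S l q q) * \prod_(m : 'I_k.+1 | (l < m)%N && (part m != j)) (c j - x m)
  = alpha k S I p q (iotaI k r part c) *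
    \prod_(m : 'I_k.+1 | (T < m)%N && (part m != j)) (c j - x m).
Proof.
move=> neq_T T_max part_I I_leqE.
have le_IT : (I <= T)%N by rewrite I_leqE.
rewrite /alpha (tlev_eq neq_T T_max le_IT) /iotaI part_I mulr_suml.
rewrite [LHS]big_mkcond [RHS]big_mkcond; apply: eq_bigr => l _ /=.
have [le_lT|lt_Tl] := leqP l T; last first.
  have -> : S l p p - S l q q = 0.
    by apply: contraTeq lt_Tl => d_l; rewrite -leqNgt T_max // -subr_eq0.
  by rewrite !mul0r !if_same.
have ord_l : (pole_ord part j l == pole_ord part j T) = (I <= l)%N.
  by rewrite I_leqE eqn_leq pole_ord_homo.
rewrite ord_l andbT; case: ifP => // le_Il; rewrite -mulrA; congr (_ * _).
rewrite (bigID (fun m : 'I_k.+1 => (m <= T)%N)) /=; congr (_ * _).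
  apply: eq_bigl => m; case: (ltnP l m) => //= lt_lm.
  case: leqP => le_mT; rewrite ?andbT ?andbF //=.
  apply/eqP => part_m; have := pole_ord_ltn lt_lm part_m.
  have := pole_ord_homo part j le_mT; move: ord_l; rewrite le_Il => /eqP; lia.
apply: eq_bigl => m; rewrite -ltnNge.
by case: (ltnP T m) => lt_Tm; rewrite ?andbF ?andbT //= (leq_ltn_trans le_lT lt_Tm).
Qed.

Lemma alpha_neq0 p q (T I : 'I_k.+1) :
  S T p p != S T q q -> (forall l : 'I_k.+1, S l p p != S l q q -> (l <= T)%N) ->
  (I <= T)%N -> alpha k S I p q (iotaI k r part c) != 0.
Proof.
move=> neq_T T_max le_IT; have [lt_Ik|le_kI] := ltnP I k.
  by apply: (c_inD lt_Ik); apply: contra neq_T => /eqlevP/(_ T le_IT)->.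
have eq_IT : I = T.
  by apply/ord_inj/eqP; rewrite eqn_leq le_IT (leq_trans (leq_ord T) le_kI).
rewrite /alpha (tlev_eq neq_T T_max le_IT) -eq_IT (big_pred1 I) => [|l]; last first.
  by rewrite -eqn_leq eq_sym.
rewrite big_pred0 => [|m]; last by rewrite ltnNge andNb.
by rewrite mulr1 subr_eq0 eq_IT.
Qed.

Lemma Sloc_neq_of_not_eqlev j nu p q : (nu <= kp j)%N ->
  ~~ eqlev k S (ii k r part j nu) p q -> ~~ eqlev (kp j) (Sloc j) nu p q.
Proof.
move=> le_nu /last_level_diff[T [le_iT neq_T T_max]].
set e := pole_ord part j T.
have lt_nu_e : (nu < e)%N by rewrite -(ii_leqE part_surj _ le_nu).
have e_gt0 : (0 < e)%N by apply: leq_ltn_trans lt_nu_e.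
have le_e : (e.-1 <= kp j)%N by have := pole_ord_leq part_surj j T; lia.
have [I val_I part_I] := ii_part part_surj le_e.
have I_leqE l : (I <= l)%N = (e <= pole_ord part j l)%N.
  by rewrite val_I ii_leqE // prednK.
have s_ord (l : 'I_k.+1) : S l p p - S l q q != 0 -> (pole_ord part j l <= e.-1.+1)%N.
  by rewrite subr_eq0 prednK // => /T_max/(pole_ord_homo part j).
have := pfrac_lead part_surj c_inj (is_pfrac_Sloc_diag p q) le_e s_ord.
rewrite prednK // (lead_sum_alpha neq_T T_max part_I I_leqE) => lead.
apply/eqlevP => /(_ (Ordinal (le_e : (e.-1 < (kp j).+1)%N)))-eq_loc.
move: lead; rewrite eq_loc /=; last by rewrite -ltnS prednK.
rewrite subrr mul0r => /esym/eqP; rewrite mulf_eq0; apply/negP; rewrite negb_or.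
rewrite (alpha_neq0 neq_T T_max) ?I_leqE //=.
by apply: prod_diff_neq0 => // m /andP[].
Qed.

Lemma eqlev_Sloc j nu p q : (nu <= kp j)%N ->
  eqlev (kp j) (Sloc j) nu p q = eqlev k S (ii k r part j nu) p q.
Proof.
move=> le_nu; apply/idP/idP => [|eq_S]; first exact/contraTT/Sloc_neq_of_not_eqlev.
apply/eqlevP => l le_nul; apply: (Sloc_eq_of_eqlev le_nu eq_S).
by rewrite le_nul -ltnS ltn_ord.
Qed.

Lemma Sloc_diag j nu : (nu <= kp j)%N -> is_diag_mx (Sloc j nu).
Proof. by move=> le_nu; apply/is_diag_mxP => p q; apply: Sloc_offdiag. Qed.

Lemma Sloc_mulmxN j nu : (nu <= kp j)%N -> Sloc j nu *m N = N *m Sloc j nu.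
Proof.
move=> le_nu; case/diag_mxP: (Sloc_diag le_nu) => d Sloc_d.
rewrite Sloc_d; apply/diag_mx_commE => p q Npq.
have eq_lev : eqlev k S (ii k r part j 0) p q.
  apply/eqlevP => l _; case/diag_mxP: (S_diag l) => s S_s.
  have [_ _ /(_ l (leq_ord l))] := S_HTL.
  by rewrite S_s !mxE !eqxx => /diag_mx_commE/(_ p q Npq).
have := Sloc_eq_of_eqlev (leq0n _) eq_lev le_nu.
by rewrite Sloc_d !mxE !eqxx.
Qed.

Local Notation Nloc j := (if j == ord0 then N else 0).

Lemma HTL_Sloc j : is_HTL (kp j) (Sloc j) (Nloc j).
Proof.
split; first by move=> nu; apply: Sloc_diag.
  case: eqP => _; last by exists 1%N; rewrite expr1.
  by have [_ N_nil _] := S_HTL.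
by move=> nu le_nu; case: eqP => _; rewrite ?Sloc_mulmxN ?mulmx0 ?mul0mx.
Qed.

Lemma blk_Sloc j nu p : (nu <= kp j)%N ->
  blk (kp j) (Sloc j) nu p = blk k S (ii k r part j nu) p.
Proof. by move=> le_nu; apply/setP => q; rewrite !inE eqlev_Sloc. Qed.

Lemma spec_type_Sloc j :
  st_iso (spec_type (kp j) (Sloc j) (Nloc j)) (target_type k r S N part j).
Proof.
split=> //; exists (fun _ B => B); split=> //= [nu le_nu | nu lt_nu B _ | B _].
- split; first by move=> B1 B2.
  by rewrite imset_id; apply: eq_imset => p; apply: blk_Sloc.
- by apply: eq_bigr => p _; rewrite blk_Sloc.
- by case: (j == ord0).
Qed.

End Unfolding.

Theorem mainTheorem2 (R : realType) (n k r : nat)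
  (S : nat -> 'M[R[i]]_n) (N : 'M[R[i]]_n)
  (part : 'I_k.+1 -> 'I_r.+1) (c : 'I_r.+1 -> R[i])
  (A : 'I_r.+1 -> nat -> 'M[R[i]]_n) :
  is_HTL k S N ->
  (forall j : 'I_r.+1, exists i : 'I_k.+1, part i = j) ->
  part ord0 = ord0 ->
  injective c ->
  inD k S (iotaI k r part c) ->
  (forall z : R[i], (forall j, z != c j) ->
     Hunf k S N (iotaI k r part c) z =
     \sum_(j < r.+1) \sum_(nu < (kj k r part j).+1) ((z - c j) ^+ nu.+1)^-1 *: A j nu) ->
  forall j : 'I_r.+1,
    exists (S' : nat -> 'M[R[i]]_n) (N' : 'M[R[i]]_n),
      [/\ is_HTL (kj k r part j) S' N',
          A j 0%N = S' 0%N + N',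
          (forall nu, (1 <= nu <= kj k r part j)%N -> A j nu = S' nu)
        & st_iso (spec_type (kj k r part j) S' N') (target_type k r S N part j)].
Proof.
move=> S_HTL part_surj part0 c_inj c_inD A_pfrac j.
exists (Sloc N A j), (if j == ord0 then N else 0); split.
- exact: HTL_Sloc S_HTL part_surj part0 c_inj A_pfrac j.
- by rewrite /Sloc andbT subrK.
- by move=> [|nu] //= _; rewrite /Sloc andbF subr0.
- exact: spec_type_Sloc part_surj part0 c_inj c_inD A_pfrac j.
Qed.
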